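(* Let $N\ge 2$ and $R\ge N+1$ be integers. There is a set $\mathcal{F}$ of flows in the Clos network $C_{N,R}$, each with demand $1$ or $\tfrac12$ (and satisfying the demand assumption below), such that $OPT(\mathcal{F})=\tfrac32$.
   Context: Clos network $C_{N,R}$: a directed graph with $N$ middle switches $M_1,\dots,M_N$, $R$ input switches $I_1,\dots,I_R$, $R$ output switches $O_1,\dots,O_R$, source servers $s_i^k$ and destination servers $t_i^k$ ($i\in[R]$, $k\in[N]$), and edges $s_i^kI_i$, $I_iM_m$, $M_mO_i$, $O_it_i^k$ for all $i\in[R]$, $m,k\in[N]$; all links have capacity $1$. A flow $f$ has a source server $s(f)$ of input switch $I_{i(f)}$, a destination server $t(f)$ of output switch $O_{j(f)}$, and a positive demand $\mathrm{dem}(f)$. A set of flows must satisfy: the total demand of flows leaving any source server is at most $1$, and the total demand of flows entering any destination server is at most $1$. A routing $r$ assigns each flow a single middle switch $r(f)\in[N]$. The congestion of $r$ is $\max_{i\in[R],m\in[N]}\max\{\sum_{f:i(f)=i,r(f)=m}\mathrm{dem}(f),\ \sum_{f:j(f)=i,r(f)=m}\mathrm{dem}(f)\}$, and $OPT(\mathcal{F})$ is the minimum congestion over all routings of $\mathcal{F}$. *)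

From HB Require Import structures.
From mathcomp Require Import all_boot all_order all_algebra.
Set Implicit Arguments. Unset Strict Implicit. Unset Printing Implicit Defensive.
Import Order.TTheory GRing.Theory Num.Theory.
Local Open Scope ring_scope.

(* A flow in C_{N,R}: source server s_{i(f)}^{k} of input switch I_{i(f)},
   destination server t_{j(f)}^{k'} of output switch O_{j(f)}, demand. *)
Record flow (N R : nat) := Flow {
  fin  : 'I_R;
  fsrv : 'I_N;
  fout : 'I_R;
  fdst : 'I_N;
  dem  : rat
}.

(* A set of flows is a finite family indexed by 'I_m (flows may share
   endpoints; they are distinct as elements of the family). *)
Definition valid_flows (N R m : nat) (F : 'I_m -> flow N R) : Prop :=
  (forall f, 0 < dem (F f)) /\
  (forall (i : 'I_R) (k : 'I_N),
      \sum_(f | (fin (F f) == i) && (fsrv (F f) == k)) dem (F f) <= 1) /\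
  (forall (i : 'I_R) (k : 'I_N),
      \sum_(f | (fout (F f) == i) && (fdst (F f) == k)) dem (F f) <= 1).

(* A routing assigns each flow a middle switch. *)
Definition routing (N m : nat) := {ffun 'I_m -> 'I_N}.

Definition load_in (N R m : nat) (F : 'I_m -> flow N R) (r : routing N m)
  (i : 'I_R) (mm : 'I_N) : rat :=
  \sum_(f | (fin (F f) == i) && (r f == mm)) dem (F f).

Definition load_out (N R m : nat) (F : 'I_m -> flow N R) (r : routing N m)
  (i : 'I_R) (mm : 'I_N) : rat :=
  \sum_(f | (fout (F f) == i) && (r f == mm)) dem (F f).

(* congestion = max over i, m of max(load on I_i M_m, load on M_m O_i);
   loads are nonnegative for positive demands, so folding max from 0 is the max. *)
Definition congestion (N R m : nat) (F : 'I_m -> flow N R) (r : routing N m) : rat :=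
  \big[Num.max/0]_(i : 'I_R) \big[Num.max/0]_(mm : 'I_N)
     Num.max (load_in F r i mm) (load_out F r i mm).

Definition OPT (N R m : nat) (F : 'I_m -> flow N R) : rat :=
  match [pick r : routing N m] with
  | Some r0 => \big[Num.min/congestion F r0]_(r : routing N m) congestion F r
  | None => 0
  end.

From HB Require Import structures.
From mathcomp Require Import all_boot all_order all_algebra.
From mathcomp Require Import zify lra.
Set Implicit Arguments. Unset Strict Implicit. Unset Printing Implicit Defensive.
Import Order.TTheory GRing.Theory Num.Theory.
Local Open Scope ring_scope.

(* With N = n.+2 middle switches, let h_k = [half_server k] (0 or 1, never k)
   and use input and output switches 0..N:
   - [fanout k]   (k < N): I_0, server k -> O_k, server k, demand 1;
   - [filler k t] (k < N): I_(k+1), the t-th server s <> h_k -> O_k, server s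
     (O_N instead when s = k), demand 1;
   - [half_lo k]  (k < N): I_(k+1), server h_k -> O_k, server h_k, demand 1/2;
   - [half_hi k]  (k < N-1): I_(k+1), server h_k -> O_(k+1), server h_(k+1),
     demand 1/2.
   Routing each flow through the middle switch named by its source server has
   congestion 3/2: a source server emits demand at most 1, and a link M_m O_i
   carries at most one unit or half_lo flow plus at most one half_hi flow.
   Conversely, if the congestion is below 3/2, a unit flow shares no link with
   another flow routed through the same middle switch. At I_(k+1) the N-1
   fillers occupy N-1 middle switches, forcing half_lo k and half_hi k onto the
   remaining one; at O_(k+1), N-1 unit flows likewise force half_hi k and
   half_lo (k+1) together. So all half_lo flows use one middle switch, avoiding
   that of each fanout k (they share O_k); but the N fanout flows leave I_0
   through all N middle switches. *)

Lemma inj_avoid2_eq (S T : finType) (u : S -> T) (a b : T) :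
  (#|T| <= #|S|.+1)%N -> injective u ->
  (forall s, u s != a) -> (forall s, u s != b) -> a = b.
Proof.
move=> cardT u_inj u_a u_b.
have : (#|[predC codom u]| <= 1)%N.
  by rewrite -(leq_add2l #|codom u|) cardC card_codom // addn1.
move/card_le1_eqP; apply; rewrite inE; apply/codomP=> -[s us].
  by move: (u_b s); rewrite -us eqxx.
by move: (u_a s); rewrite -us eqxx.
Qed.

Lemma ord_chain_const (T : Type) m (g : 'I_m.+1 -> T) :
  (forall k : 'I_m, g (widen_ord (leqnSn m) k) = g (lift ord0 k)) ->
  forall k, g k = g ord0.
Proof.
move=> g_step [k lt_k]; elim: k lt_k => [|k IHk] lt_k; first by congr g; apply: val_inj.
have lt_km : (k < m)%N by [].
rewrite (_ : Ordinal lt_k = lift ord0 (Ordinal lt_km)); last exact: val_inj.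
rewrite -g_step -(IHk (ltnW lt_k)); congr g; exact: val_inj.
Qed.

Lemma inord_eqE m k (i : 'I_m.+1) : (k <= m)%N -> (inord k == i) = (k == i).
Proof. by move=> le_km; rewrite -val_eqE /= inordK. Qed.

Lemma sum_enum_val (R : nmodType) (T : finType) (P : pred T) (F : T -> R) :
  \sum_(i < #|T| | P (enum_val i)) F (enum_val i) = \sum_(x | P x) F x.
Proof. by rewrite -big_enum_val_cond; apply: eq_bigl => x; rewrite inE. Qed.

Section Fibers.
Variables (R : numDomainType) (aT : eqType).

Lemma sum_fiber_inj_le (T : finType) (K : T -> aT) (F : T -> R) c d :
  injective K -> (forall x, F x <= d) -> 0 <= d -> \sum_(x | K x == c) F x <= d.
Proof.
move=> K_inj F_le d_ge0; case: (pickP (fun x => K x == c)) => [x0 Kx0|no_x]; last first.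
  by rewrite big_pred0.
rewrite (bigD1 x0) //= big1 ?addr0 // => x /andP[Kx]; apply: contraNeq => _.
by apply/eqP/K_inj; rewrite (eqP Kx) (eqP Kx0).
Qed.

Lemma sum_disjoint_fibers_le (T1 T2 : finType) (K1 : T1 -> aT) (K2 : T2 -> aT)
    (F1 : T1 -> R) (F2 : T2 -> R) c d :
  (forall x y, K1 x != K2 y) ->
  \sum_(x | K1 x == c) F1 x <= d -> \sum_(y | K2 y == c) F2 y <= d ->
  \sum_(x | K1 x == c) F1 x + \sum_(y | K2 y == c) F2 y <= d.
Proof.
move=> K12 le1 le2; case: (pickP (fun x => K1 x == c)) => [x0 /eqP Kx0|no_x].
  rewrite [X in _ + X]big_pred0 ?addr0 // => y; apply/negbTE.
  by rewrite -Kx0 eq_sym K12.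
by rewrite big_pred0 // add0r.
Qed.

End Fibers.

Section Congestion.
Variables (N R m : nat) (F : 'I_m -> flow N R).

Lemma load_in_le_congestion (r : routing N m) i mm :
  load_in F r i mm <= congestion F r.
Proof.
apply: le_trans (le_bigmax _ _ i); apply: le_trans (le_bigmax _ _ mm).
by rewrite le_max lexx.
Qed.

Lemma load_out_le_congestion (r : routing N m) i mm :
  load_out F r i mm <= congestion F r.
Proof.
apply: le_trans (le_bigmax _ _ i); apply: le_trans (le_bigmax _ _ mm).
by rewrite le_max lexx orbT.
Qed.

Lemma congestion_le (r : routing N m) c : 0 <= c ->
  (forall i mm, load_in F r i mm <= c /\ load_out F r i mm <= c) ->
  congestion F r <= c.
Proof.
move=> c_ge0 loads_le; apply: bigmax_le => // i _; apply: bigmax_le => // mm _.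
by have [? ?] := loads_le i mm; rewrite ge_max; apply/andP.
Qed.

Lemma routed_apart (r : routing N m) f1 f2 :
  (forall f, 0 <= dem (F f)) -> f1 != f2 ->
  (fin (F f1) == fin (F f2)) || (fout (F f1) == fout (F f2)) ->
  congestion F r < dem (F f1) + dem (F f2) -> r f1 != r f2.
Proof.
move=> dem_ge0 f12 share cong_lt; apply/eqP => r12; move: cong_lt; apply/negP.
rewrite -leNgt; have rest_ge0 P : 0 <= \sum_(f | P f) dem (F f) by exact: sumr_ge0.
case/orP: share => /eqP share.
  apply: le_trans (load_in_le_congestion r (fin (F f1)) (r f1)).
  rewrite /load_in (bigD1 f1) ?eqxx //= (bigD1 f2) /=; last first.
    by rewrite share r12 !eqxx eq_sym f12.
  by rewrite addrA lerDl rest_ge0.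
apply: le_trans (load_out_le_congestion r (fout (F f1)) (r f1)).
rewrite /load_out (bigD1 f1) ?eqxx //= (bigD1 f2) /=; last first.
  by rewrite share r12 !eqxx eq_sym f12.
by rewrite addrA lerDl rest_ge0.
Qed.

Lemma OPT_eq (r0 : routing N m) c :
  congestion F r0 <= c -> (forall r, c <= congestion F r) -> OPT F = c.
Proof.
move=> r0_le le_cong; rewrite /OPT; case: pickP => [r1 _|]; last by move/(_ r0).
apply/eqP; rewrite eq_le; apply/andP; split.
  exact: bigmin_inf r0_le.
exact: le_bigmin.
Qed.

End Congestion.

Section ClosInstance.
Variable n : nat.

Definition unit_flow : finType := ('I_n.+2 + 'I_n.+2 * 'I_n.+1)%type.
Definition half_flow : finType := ('I_n.+2 + 'I_n.+1)%type.
Definition flow_index : finType := (unit_flow + half_flow)%type.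

Local Notation fanout k := (inl (inl k)).
Local Notation filler k t := (inl (inr (k, t))).
Local Notation half_lo k := (inr (inl k)).
Local Notation half_hi k := (inr (inr k)).

Definition half_server (k : nat) : nat := k == 0%N.
Definition filler_server (k t : nat) : nat := bump (half_server k) t.

Definition src_switch (x : flow_index) : nat :=
  match x with
  | fanout _ => 0 | filler k _ => k.+1 | half_lo k => k.+1 | half_hi k => k.+1
  end.
Definition src_server (x : flow_index) : nat :=
  match x with
  | fanout k => k | filler k t => filler_server k t
  | half_lo k => half_server k | half_hi k => half_server k
  end.
Definition dst_switch (x : flow_index) : nat :=
  match x with
  | fanout k => k | filler k t => if filler_server k t == k then n.+2 else k
  | half_lo k => k | half_hi k => k.+1
  end.
Definition dst_server (x : flow_index) : nat :=
  match x with
  | inl _ => src_server x | half_lo k => half_server k | half_hi k => half_server k.+1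
  end.
Definition demand (x : flow_index) : rat := if x is inl _ then 1 else 1 / 2.

Lemma demand_gt0 x : 0 < demand x.
Proof. by case: x => ? /=; lra. Qed.

Ltac flow_arith :=
  simpl; unfold filler_server, half_server, bump;
  repeat match goal with |- context [if ?b then _ else _] => case: (boolP b) end;
  lia.

Lemma src_switch_le x : (src_switch x <= n.+2)%N.
Proof. by case: x => [[[k ?]|[[k ?] [t ?]]]|[[k ?]|[k ?]]]; flow_arith. Qed.
Lemma dst_switch_le x : (dst_switch x <= n.+2)%N.
Proof. by case: x => [[[k ?]|[[k ?] [t ?]]]|[[k ?]|[k ?]]]; flow_arith. Qed.
Lemma src_server_lt x : (src_server x < n.+2)%N.
Proof. by case: x => [[[k ?]|[[k ?] [t ?]]]|[[k ?]|[k ?]]]; flow_arith. Qed.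
Lemma dst_server_lt x : (dst_server x < n.+2)%N.
Proof. by case: x => [[[k ?]|[[k ?] [t ?]]]|[[k ?]|[k ?]]]; flow_arith. Qed.

(* Under routing by source server the load of I_i M_m is the demand of the
   [in_key] fiber over (i, m) and that of M_m O_i the [out_key] fiber; the
   [in_key] and [dst_key] fibers are the flows of one source, resp. destination,
   server. *)
Definition in_key (x : flow_index) := (src_switch x, src_server x).
Definition out_key (x : flow_index) := (dst_switch x, src_server x).
Definition dst_key (x : flow_index) := (dst_switch x, dst_server x).

Definition unit_code (u : unit_flow) : nat * nat :=
  match u with inl k => (0%N, val k) | inr (k, t) => (k.+1, val t) end.

Lemma unit_code_inj : injective unit_code.
Proof.
move=> [k1|[k1 t1]] [k2|[k2 t2]] [] //; first by move=> /val_inj ->.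
by move=> /val_inj -> /val_inj ->.
Qed.

Lemma unit_key_inj (K : unit_flow -> nat * nat) :
  (forall u1 u2, K u1 == K u2 -> unit_code u1 == unit_code u2) -> injective K.
Proof. by move=> K_code u1 u2 /eqP /K_code /eqP /unit_code_inj. Qed.

Lemma in_key_unit_inj : injective (fun u : unit_flow => in_key (inl u)).
Proof.
apply: unit_key_inj => -[[k1 ?]|[[k1 ?] [t1 ?]]] [[k2 ?]|[[k2 ?] [t2 ?]]];
  rewrite /= !xpair_eqE; flow_arith.
Qed.

Lemma out_key_unit_inj : injective (fun u : unit_flow => out_key (inl u)).
Proof.
apply: unit_key_inj => -[[k1 ?]|[[k1 ?] [t1 ?]]] [[k2 ?]|[[k2 ?] [t2 ?]]];
  rewrite /= !xpair_eqE; flow_arith.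
Qed.

Lemma in_key_unit_half u h : in_key (inl u) != in_key (inr h).
Proof.
case: u h => [[k ?]|[[k ?] [t ?]]] [[k' ?]|[k' ?]];
  rewrite /in_key /= ?xpair_eqE //; flow_arith.
Qed.

Lemma dst_key_unit_half u h : dst_key (inl u) != dst_key (inr h).
Proof.
case: u h => [[k ?]|[[k ?] [t ?]]] [[k' ?]|[k' ?]];
  rewrite /dst_key /= ?xpair_eqE //; flow_arith.
Qed.

Lemma sum_fiber_le1 (K : flow_index -> nat * nat) c :
  injective (fun u => K (inl u)) -> injective (fun k => K (half_lo k)) ->
  injective (fun k => K (half_hi k)) -> (forall u h, K (inl u) != K (inr h)) ->
  \sum_(x | K x == c) demand x <= 1.
Proof.
move=> K_unit K_lo K_hi K_unit_half.
rewrite big_sumType; apply: sum_disjoint_fibers_le => //.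
  exact: sum_fiber_inj_le K_unit _ ler01.
rewrite big_sumType; apply: (@le_trans _ _ (1 / 2 + 1 / 2)); last by lra.
by apply: lerD; apply: sum_fiber_inj_le => // x /=; lra.
Qed.

Lemma sum_in_key c : \sum_(x | in_key x == c) demand x <= 1.
Proof.
apply: sum_fiber_le1; first exact: in_key_unit_inj; last exact: in_key_unit_half.
  by move=> k1 k2 [/val_inj].
by move=> k1 k2 [/val_inj].
Qed.

Lemma sum_dst_key c : \sum_(x | dst_key x == c) demand x <= 1.
Proof.
apply: sum_fiber_le1; first exact: out_key_unit_inj; last exact: dst_key_unit_half.
  by move=> k1 k2 [/val_inj].
by move=> k1 k2 [/val_inj].
Qed.

Lemma sum_out_key c : \sum_(x | out_key x == c) demand x <= 3 / 2.
Proof.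
rewrite big_sumType /= [X in _ + X]big_sumType /= addrA.
apply: (@le_trans _ _ (1 + 1 / 2)); last by lra.
apply: lerD.
  apply: sum_disjoint_fibers_le => [u k||].
  - exact: (dst_key_unit_half u (inl k)).
  - exact: sum_fiber_inj_le out_key_unit_inj _ ler01.
  - by apply: sum_fiber_inj_le => [k1 k2 [/val_inj]|x|] //=; lra.
by apply: sum_fiber_inj_le => [k1 k2 [/val_inj]|x|] //=; lra.
Qed.

Lemma filler_server_inj k : injective (filler_server k).
Proof. exact: can_inj (bumpK _). Qed.

Definition same_switch (x y : flow_index) :=
  (src_switch x == src_switch y) || (dst_switch x == dst_switch y).

Section Separation.
Variable rho : flow_index -> 'I_n.+2.
Hypothesis rho_separates : forall (u : unit_flow) (y : flow_index),
  inl u != y -> same_switch (inl u) y -> rho (inl u) != rho y.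

Lemma rho_units_inj (S : eqType) (e : S -> unit_flow) :
  injective e -> (forall s1 s2, same_switch (inl (e s1)) (inl (e s2))) ->
  injective (fun s => rho (inl (e s))).
Proof.
move=> e_inj e_same s1 s2 /eqP; apply: contraTeq => s12.
by apply: rho_separates; first by apply: contra s12 => /eqP [/e_inj ->].
Qed.

Lemma rho_half_in (k : 'I_n.+1) :
  rho (half_lo (widen_ord (leqnSn _) k)) = rho (half_hi k).
Proof.
set j := widen_ord _ k.
have same_src x y : src_switch x = j.+1 -> src_switch y = j.+1 -> same_switch x y.
  by move=> x_j y_j; rewrite /same_switch x_j y_j eqxx.
apply: (@inj_avoid2_eq _ _ (fun t => rho (filler j t))).
- by rewrite !card_ord.
- apply: (rho_units_inj (e := fun t => inr (j, t))) => [t1 t2 [->] //| t1 t2].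
  exact: same_src.
- by move=> t; apply: rho_separates => //; apply: same_src.
- by move=> t; apply: rho_separates => //; apply: same_src.
Qed.

Lemma rho_half_out (k : 'I_n.+1) : rho (half_hi k) = rho (half_lo (lift ord0 k)).
Proof.
set j := lift ord0 k.
pose out_unit (t : 'I_n.+1) : unit_flow :=
  if filler_server j t == j then inl j else inr (j, t).
have out_unit_dst t : dst_switch (inl (out_unit t)) = k.+1.
  by rewrite /out_unit; case: ifP => [_|/= ->].
have same_dst x y : dst_switch x = k.+1 -> dst_switch y = k.+1 -> same_switch x y.
  by move=> x_k y_k; rewrite /same_switch x_k y_k eqxx orbT.
apply: (@inj_avoid2_eq _ _ (fun t => rho (inl (out_unit t)))).
- by rewrite !card_ord.
- apply: rho_units_inj => [t1 t2|t1 t2]; last exact: same_dst.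
  rewrite /out_unit; case: eqP => [e1|_]; case: eqP => [e2|_] //; last by case=> ->.
  by move=> _; apply/val_inj/(@filler_server_inj j); rewrite e1 e2.
- by move=> t; apply: rho_separates => //; apply: same_dst.
- by move=> t; apply: rho_separates => //; apply: same_dst.
Qed.

Lemma rho_half_lo_const k : rho (half_lo k) = rho (half_lo ord0).
Proof.
apply: (ord_chain_const (g := fun k => rho (half_lo k))) => {}k.
exact: etrans (rho_half_in k) (rho_half_out k).
Qed.

Lemma no_separating_routing : False.
Proof.
have fanout_inj : injective (fun k => rho (fanout k)).
  by apply: (rho_units_inj (e := inl)) => [k1 k2 [->] | k1 k2].
case/codomP: (inj_card_onto fanout_inj (leqnn _) (rho (half_lo ord0))) => k /eqP.
rewrite -(rho_half_lo_const k) eq_sym; apply/negP; apply: rho_separates => //.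
by rewrite /same_switch eqxx orbT.
Qed.

End Separation.

Section ClosFlows.
Variable r : nat.
Hypothesis n_lt_r : (n.+2 <= r)%N.

Definition clos_flow (x : flow_index) : flow n.+2 r.+1 :=
  Flow (inord (src_switch x)) (inord (src_server x))
       (inord (dst_switch x)) (inord (dst_server x)) (demand x).

Definition clos_flows (f : 'I_#|flow_index|) := clos_flow (enum_val f).

Definition server_routing : routing n.+2 #|flow_index| :=
  [ffun f => inord (src_server (enum_val f))].

Let src_switch_le_r x : (src_switch x <= r)%N := leq_trans (src_switch_le x) n_lt_r.
Let dst_switch_le_r x : (dst_switch x <= r)%N := leq_trans (dst_switch_le x) n_lt_r.

Lemma sum_clos_flows (P : pred 'I_#|flow_index|) (K : flow_index -> nat * nat) c :
  (forall f, P f = (K (enum_val f) == c)) ->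
  \sum_(f | P f) dem (clos_flows f) = \sum_(x | K x == c) demand x.
Proof. by move=> PK; rewrite -[RHS]sum_enum_val; apply: eq_bigl. Qed.

Lemma clos_flows_valid : valid_flows clos_flows.
Proof.
split; first by move=> f; exact: demand_gt0.
split=> i k.
  rewrite (@sum_clos_flows _ in_key (val i, val k)) ?sum_in_key // => f.
  by rewrite !inord_eqE ?xpair_eqE // -ltnS src_server_lt.
rewrite (@sum_clos_flows _ dst_key (val i, val k)) ?sum_dst_key // => f.
by rewrite !inord_eqE ?xpair_eqE // -ltnS dst_server_lt.
Qed.

Lemma congestion_server_routing : congestion clos_flows server_routing <= 3 / 2.
Proof.
apply: congestion_le => [|i mm]; first by lra.
split.
  rewrite /load_in (@sum_clos_flows _ in_key (val i, val mm)) => [|f].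
    by apply: le_trans (sum_in_key _) _; lra.
  by rewrite ffunE !inord_eqE ?xpair_eqE // -ltnS src_server_lt.
rewrite /load_out (@sum_clos_flows _ out_key (val i, val mm)) => [|f].
  exact: sum_out_key.
by rewrite ffunE !inord_eqE ?xpair_eqE // -ltnS src_server_lt.
Qed.

Lemma congestion_clos_flows_ge (rt : routing n.+2 #|flow_index|) :
  3 / 2 <= congestion clos_flows rt.
Proof.
rewrite leNgt; apply/negP => cong_lt.
apply: (no_separating_routing (rho := fun x => rt (enum_rank x))) => u y uy share.
apply: (@routed_apart _ _ _ clos_flows) => [f|||]; first exact: ltW (demand_gt0 _).
- by rewrite (inj_eq enum_rank_inj).
- rewrite /clos_flows !enum_rankK; case/orP: share => /eqP share; apply/orP.
    by left; apply/eqP; exact: (congr1 (@inord r) share).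
  by right; apply/eqP; exact: (congr1 (@inord r) share).
- rewrite /clos_flows !enum_rankK; apply: lt_le_trans cong_lt _.
  by case: y {uy share} => ? /=; lra.
Qed.

Lemma OPT_clos_flows : OPT clos_flows = 3 / 2.
Proof. exact: OPT_eq congestion_server_routing congestion_clos_flows_ge. Qed.

End ClosFlows.

End ClosInstance.

Theorem mainTheorem2 (N R : nat) (hN : (2 <= N)%N) (hR : (N.+1 <= R)%N) :
  exists (m : nat) (F : 'I_m -> flow N R),
    valid_flows F /\
    (forall f, dem (F f) = 1 \/ dem (F f) = 1 / 2) /\
    OPT F = 3 / 2.
Proof.
case: N hN hR => [|[|n]] // _; case: R => [|r] // hR.
exists #|flow_index n|, (clos_flows r); split; first exact: clos_flows_valid.
split; last exact: OPT_clos_flows.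
by move=> f; rewrite /clos_flows; case: (enum_val f) => ?; [left|right].
Qed.
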